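(* Let $G=(V,E,A)$ be an undirected attributed graph with $A=\{a,b\}$, let $k,\delta$ be integers, and let $R,C\subseteq V$ be disjoint vertex sets. Let $G'$ be the subgraph of $G$ induced by $R\cup C$, properly colored with colors from a totally ordered set (adjacent vertices receive distinct colors), and let every vertex have a distinct integer ID. Define the total order $\prec$ on $R\cup C$ by $u\prec v$ iff $color(u)<color(v)$, or $color(u)=color(v)$ and $ID(u)<ID(v)$, and let $\vec G'$ be the directed acyclic graph obtained from $G'$ by orienting each edge from its $\prec$-smaller endpoint to its $\prec$-larger endpoint. Let $CP(G')$ be a colorful directed path of $\vec G'$ with the maximum number of vertices. Then $ub_{cp}=|CP(G')|$ satisfies $MRFC(R,C)\le ub_{cp}$.
   Context: For $S\subseteq V$, $cnt_S(x)=|\{v\in S:A(v)=x\}|$. A $(k,\delta)$-relative fair clique of $G$ is a clique $K$ of $G$ with $cnt_K(a)\ge k$, $cnt_K(b)\ge k$, $|cnt_K(a)-cnt_K(b)|\le\delta$, such that no clique $K'\supsetneq K$ of $G$ satisfies these three conditions. $MRFC(R,C)$ denotes the maximum number of vertices of a $(k,\delta)$-relative fair clique $K$ of $G$ with $R\subseteq K\subseteq R\cup C$ (the search instance $(R,C)$: $R$ is the current partial clique and $C$ the candidate set). A colorful path is a path $v_1,\dots,v_p$ whose vertices all have pairwise distinct colors; $|CP(G')|$ is its number of vertices. *)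

From mathcomp Require Import all_boot all_order all_algebra.
Set Implicit Arguments. Unset Strict Implicit. Unset Printing Implicit Defensive.
Import Order.TTheory GRing.Theory Num.Theory.

(* Attributes {a,b} are encoded as bool: a = true, b = false. *)
Section Defs.
Variables (V : finType) (e : rel V) (A : V -> bool).

Definition cnt (S : {set V}) (x : bool) : nat := #|[set v in S | A v == x]|.

Definition is_clique (K : {set V}) : bool :=
  [forall u in K, forall v in K, (u != v) ==> e u v].

Definition fair (k delta : int) (K : {set V}) : bool :=
  [&& (k <= (cnt K true)%:Z)%R, (k <= (cnt K false)%:Z)%R
    & (`|(cnt K true)%:Z - (cnt K false)%:Z| <= delta)%R].

Definition rfc (k delta : int) (K : {set V}) : bool :=
  [&& is_clique K, fair k delta K &
      [forall K' : {set V}, ((K \proper K') && is_clique K') ==> ~~ fair k delta K']].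

(* MRFC(R,C): max size of an rfc K with R <= K <= R u C (0 if none) *)
Definition MRFC (k delta : int) (R C : {set V}) : nat :=
  \max_(K : {set V} | [&& rfc k delta K, R \subset K & K \subset R :|: C]) #|K|.

Variables (d : Order.disp_t) (Col : orderType d) (color : V -> Col) (ID : V -> int).

Definition prec (u v : V) : bool :=
  ((color u < color v)%O || ((color u == color v) && (ID u < ID v)%R)).

Definition arc (R C : {set V}) (u v : V) : bool :=
  [&& u \in R :|: C, v \in R :|: C, e u v & prec u v].

Definition colorful_dpath (R C : {set V}) (p : seq V) : bool :=
  [&& all (fun v => v \in R :|: C) p, sorted (arc R C) p & uniq (map color p)].
End Defs.

From Pilot Require Import Defs.
From mathcomp Require Import all_boot all_order all_algebra.
Import Order.TTheory.

Set Implicit Arguments.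
Unset Strict Implicit.
Unset Printing Implicit Defensive.

(* A clique of G' is properly coloured, so its colours are pairwise distinct;
   listing it by increasing colour therefore gives a colorful directed path of
   the oriented G', because each consecutive pair is an edge oriented from
   smaller to larger colour.  Hence every clique in R u C, and in particular
   every relative fair clique counted by MRFC(R,C), has at most |CP(G')|
   vertices. *)

Section CliqueToColorfulPath.

Variables (V : finType) (e : rel V).

Lemma is_cliqueP (K : {set V}) :
  is_clique e K -> {in K &, forall u v, u != v -> e u v}.
Proof.
rewrite /is_clique => /forallP clK u v uK vK.
by move: (clK u); rewrite uK => /forallP/(_ v); rewrite vK /= => /implyP.
Qed.

Variables (d : Order.disp_t) (Col : orderType d) (color : V -> Col).

Definition color_sort (K : {set V}) : seq V :=
  sort (relpre color <=%O) (enum K).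

Lemma mem_color_sort (K : {set V}) : color_sort K =i K.
Proof. by move=> u; rewrite mem_sort mem_enum. Qed.

Lemma size_color_sort (K : {set V}) : size (color_sort K) = #|K|.
Proof. by rewrite size_sort cardE. Qed.

Lemma color_sort_lt (K : {set V}) :
  {in K &, injective color} -> sorted (relpre color <%O) (color_sort K).
Proof.
move=> color_injK; rewrite -sorted_map lt_sorted_uniq_le sorted_map.
rewrite sort_sorted ?andbT; last by move=> u v; exact: le_total.
rewrite map_inj_in_uniq ?sort_uniq ?enum_uniq //.
by move=> u v; rewrite !mem_color_sort; exact: color_injK.
Qed.

Lemma clique_color_inj (S K : {set V}) :
  {in S &, forall u v, e u v -> color u != color v} ->
  is_clique e K -> K \subset S -> {in K &, injective color}.
Proof.
move=> color_proper clK /subsetP KS u v uK vK cuv; apply/eqP; apply: contraT.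
move=> /(is_cliqueP clK uK vK)/(color_proper u v (KS u uK) (KS v vK)).
by rewrite cuv eqxx.
Qed.

Variable (ID : V -> int).

Lemma colorful_dpath_color_sort (R C K : {set V}) :
  {in R :|: C &, forall u v, e u v -> color u != color v} ->
  is_clique e K -> K \subset R :|: C ->
  colorful_dpath e color ID R C (color_sort K).
Proof.
move=> color_proper clK KRC.
have color_injK := clique_color_inj color_proper clK KRC.
have sort_in_K : all [in K] (color_sort K).
  by apply/allP => u; rewrite mem_color_sort.
move/subsetP: KRC => KRC; apply/and3P; split.
- by apply/allP => u; rewrite mem_color_sort => /KRC.
- apply: (sub_in_sorted _ sort_in_K (color_sort_lt color_injK)).
  move=> u v uK vK /= ltc.
  have uv : u != v by apply: contraTneq ltc => ->; rewrite ltxx.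
  (* [arc] alone would denote the cycle arc of path.v *)
  by rewrite /Defs.arc /prec !KRC ?(is_cliqueP clK) ?ltc.
- rewrite map_inj_in_uniq ?sort_uniq ?enum_uniq // => u v.
  by rewrite !mem_color_sort; exact: color_injK.
Qed.

End CliqueToColorfulPath.

Lemma MRFC_le_clique_bound (V : finType) (e : rel V) (A : V -> bool)
    (k delta : int) (R C : {set V}) (n : nat) :
  (forall K, is_clique e K -> K \subset R :|: C -> #|K| <= n) ->
  MRFC e A k delta R C <= n.
Proof.
move=> bound; apply/bigmax_leqP => K /and3P[/and3P[clK _ _] _ KRC].
exact: bound.
Qed.

Theorem lemma14 (V : finType) (e : rel V) (A : V -> bool)
  (e_sym : symmetric e) (e_irr : irreflexive e)
  (k delta : int) (R C : {set V}) (RC_disj : [disjoint R & C])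
  (d : Order.disp_t) (Col : orderType d) (color : V -> Col)
  (color_proper : forall u v, u \in R :|: C -> v \in R :|: C -> e u v ->
                  color u != color v)
  (ID : V -> int) (ID_inj : injective ID)
  (p : seq V) (p_cp : colorful_dpath e color ID R C p)
  (p_max : forall q : seq V, colorful_dpath e color ID R C q -> size q <= size p) :
  MRFC e A k delta R C <= size p.
Proof.
apply: MRFC_le_clique_bound => K clK KRC.
have /p_max : colorful_dpath e color ID R C (color_sort color K).
  exact: colorful_dpath_color_sort.
by rewrite size_color_sort.
Qed.
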